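(* Let $\mathbf A$ be a finite subdirectly irreducible cBCK-algebra and let $a$ be an atom of $\mathbf A$. Then $\mathbf A$ is generated (as a cBCK-algebra) by the set $\mathrm{m}(\mathbf A) \cup \{a\}$.
   Context: A BCK-algebra is an algebra $(A,\ominus,0)$ of type $(2,0)$ satisfying $((x\ominus y)\ominus(x\ominus z))\ominus(z\ominus y)=0$, $x\ominus 0=x$, $0\ominus x=0$, and the quasi-identity ($x\ominus y=0$ and $y\ominus x=0$ imply $x=y$). It is partially ordered by $x\le y$ iff $x\ominus y=0$; $0$ is the least element. A cBCK-algebra (commutative BCK-algebra) is a BCK-algebra additionally satisfying $x\ominus(x\ominus y)=y\ominus(y\ominus x)$; cBCK-algebras form a variety, and the order is a meet-semilattice with $x\wedge y=x\ominus(x\ominus y)$. It is known that a finite nontrivial subdirectly irreducible cBCK-algebra has a unique atom and, as a poset, is a rooted tree with root $0$. $\mathrm{m}(\mathbf A)$ denotes the set of maximal elements of $\mathbf A$. *)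

From mathcomp Require Import all_boot.
Set Implicit Arguments. Unset Strict Implicit. Unset Printing Implicit Defensive.

Definition is_BCK (T : Type) (sub : T -> T -> T) (zero : T) : Prop :=
  (forall x y z, sub (sub (sub x y) (sub x z)) (sub z y) = zero) /\
  (forall x, sub x zero = x) /\
  (forall x, sub zero x = zero) /\
  (forall x y, sub x y = zero -> sub y x = zero -> x = y).

Definition is_cBCK (T : Type) (sub : T -> T -> T) (zero : T) : Prop :=
  is_BCK sub zero /\ (forall x y, sub x (sub x y) = sub y (sub y x)).

Definition bck_le (T : Type) (sub : T -> T -> T) (zero : T) (x y : T) : Prop :=
  sub x y = zero.

Definition is_congruence (T : Type) (sub : T -> T -> T) (th : T -> T -> Prop) : Prop :=
  (forall x, th x x) /\
  (forall x y, th x y -> th y x) /\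
  (forall x y z, th x y -> th y z -> th x z) /\
  (forall x x' y y', th x x' -> th y y' -> th (sub x y) (sub x' y')).

(* Subdirectly irreducible: nontrivial and the intersection of all
   congruences different from the identity congruence is not the identity. *)
Definition subdirectly_irreducible (T : Type) (sub : T -> T -> T) : Prop :=
  exists x y : T, x <> y /\
    forall th, is_congruence sub th ->
      (exists u v, u <> v /\ th u v) -> th x y.

Definition subalg_closed (T : Type) (sub : T -> T -> T) (zero : T) (B : T -> Prop) : Prop :=
  B zero /\ (forall x y, B x -> B y -> B (sub x y)).

Definition generated (T : Type) (sub : T -> T -> T) (zero : T) (S : T -> Prop) (x : T) : Prop :=
  forall B, subalg_closed sub zero B -> (forall s, S s -> B s) -> B x.

Definition is_maximal (T : Type) (sub : T -> T -> T) (zero : T) (x : T) : Prop :=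
  forall y, bck_le sub zero x y -> y = x.

Definition is_atom (T : Type) (sub : T -> T -> T) (zero : T) (a : T) : Prop :=
  a <> zero /\ forall y, bck_le sub zero y a -> y = zero \/ y = a.

From mathcomp Require Import all_boot.

Set Implicit Arguments.
Unset Strict Implicit.
Unset Printing Implicit Defensive.

(* In a subdirectly irreducible cBCK-algebra two nonzero elements never have
   meet 0: otherwise the annihilator I of one of them and the annihilator of I
   are nonzero ideals meeting only in 0, so their congruences cannot both
   contain the monolith.  Hence the atom a lies below every nonzero s, and for
   y < s we get a ≼ s ⊖ y, whence y = s ⊓ y ≼ s ⊖ a < s.  So a subalgebra
   containing a and s contains everything below s (induction on the size of
   the downset of s), and every x lies below a maximal element. *)

Section BCK.

Variables (T : Type) (sub : T -> T -> T) (zero : T).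

Local Notation "x ⊖ y" := (sub x y) (at level 50, left associativity).
Local Notation "x ⊓ y" := (x ⊖ (x ⊖ y)) (at level 40, left associativity).
Local Notation "x ≼ y" := (x ⊖ y = zero) (at level 70, no associativity).

Hypothesis bck : is_BCK sub zero.

Lemma le_subsub x y z : (x ⊖ y) ⊖ (x ⊖ z) ≼ z ⊖ y.
Proof. by case: bck. Qed.

Lemma subx0 x : x ⊖ zero = x.
Proof. by case: bck => _ []. Qed.

Lemma sub0x x : zero ⊖ x = zero.
Proof. by case: bck => _ [_ []]. Qed.

Lemma le_anti x y : x ≼ y -> y ≼ x -> x = y.
Proof. by case: bck => _ [_ [_]]; apply. Qed.

Lemma subxx x : x ⊖ x = zero.
Proof. by have := le_subsub x zero zero; rewrite !subx0. Qed.

Lemma le_trans x y z : x ≼ y -> y ≼ z -> x ≼ z.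
Proof. by move=> xy yz; have := le_subsub x z y; rewrite xy yz !subx0. Qed.

Lemma le_sub2l x y z : z ≼ y -> x ⊖ y ≼ x ⊖ z.
Proof. by move=> zy; have := le_subsub x y z; rewrite zy subx0. Qed.

Lemma le_sub2r x y z : x ≼ y -> x ⊖ z ≼ y ⊖ z.
Proof. by move=> xy; have := le_subsub x z y; rewrite xy subx0. Qed.

Lemma le_subr x y : x ⊖ y ≼ x.
Proof. by have := le_sub2l x (sub0x y); rewrite subx0. Qed.

Lemma le_meetr x y : x ⊓ y ≼ y.
Proof. by have := le_subsub x zero y; rewrite !subx0. Qed.

Lemma meet_id x y : x ≼ y -> x ⊓ y = x.
Proof. by move=> xy; rewrite xy subx0. Qed.

Lemma subAC x y z : x ⊖ y ⊖ z = x ⊖ z ⊖ y.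
Proof.
have le_AC u v w : u ⊖ v ⊖ w ≼ u ⊖ w ⊖ v.
  by apply: (le_trans (le_sub2l _ (le_meetr u w))); apply: le_subsub.
by apply: le_anti.
Qed.

Record ideal (I : T -> Prop) : Prop := Ideal {
  ideal0 : I zero;
  ideal_closed : forall x y, I (x ⊖ y) -> I y -> I x
}.

Definition ideal_cong (I : T -> Prop) x y := I (x ⊖ y) /\ I (y ⊖ x).

Section Ideal.

Variables (I : T -> Prop) (idI : ideal I).

Lemma ideal_le x y : I y -> x ≼ y -> I x.
Proof. by move=> Iy xy; apply: (ideal_closed idI _ Iy); rewrite xy; apply: ideal0. Qed.

Lemma ideal_cong_trans x y z :
  ideal_cong I x y -> ideal_cong I y z -> ideal_cong I x z.
Proof.
move=> [Ixy Iyx] [Iyz Izy]; split.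
  by apply: (ideal_closed idI _ Ixy); apply: ideal_le Iyz _; apply: le_subsub.
by apply: (ideal_closed idI _ Izy); apply: ideal_le Iyx _; apply: le_subsub.
Qed.

Lemma ideal_cong_subl x y y' :
  ideal_cong I y y' -> ideal_cong I (x ⊖ y) (x ⊖ y').
Proof.
move=> [Iyy' Iy'y]; split.
  by apply: ideal_le Iy'y _; apply: le_subsub.
by apply: ideal_le Iyy' _; apply: le_subsub.
Qed.

(* (x ⊖ y) ⊖ (x' ⊖ y) ⊖ (x ⊖ x') = (x ⊖ y) ⊖ (x ⊖ x') ⊖ (x' ⊖ y) = 0 *)
Lemma ideal_cong_subr x x' y :
  ideal_cong I x x' -> ideal_cong I (x ⊖ y) (x' ⊖ y).
Proof.
have key u v w : I (u ⊖ v) -> I (u ⊖ w ⊖ (v ⊖ w)).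
  move=> Iuv; apply: (ideal_closed idI _ Iuv); apply: ideal_le (ideal0 idI) _.
  by rewrite subx0 subAC; apply: le_subsub.
by move=> [Ixx' Ix'x]; split; apply: key.
Qed.

Lemma ideal_cong_congruence : is_congruence sub (ideal_cong I).
Proof.
split; first by move=> x; rewrite /ideal_cong subxx; split; apply: ideal0.
split; first by move=> x y [].
split; first exact: ideal_cong_trans.
move=> x x' y y' xx' yy'.
by apply: (ideal_cong_trans (ideal_cong_subl _ yy')); apply: ideal_cong_subr.
Qed.

End Ideal.

Section Commutative.

Hypothesis meetC : forall x y, x ⊓ y = y ⊓ x.

Lemma le_meet u x y : u ≼ x -> u ≼ y -> u ≼ x ⊓ y.
Proof.
move=> ux uy; have := le_sub2l x (le_sub2l x uy).
by rewrite meetC ux subx0.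
Qed.

Lemma sub_neq a s : a <> zero -> a ≼ s -> s ⊖ a <> s.
Proof. by move=> a0 a_s sa; apply: a0; rewrite -(meet_id a_s) meetC sa subxx. Qed.

Definition ann (X : T -> Prop) y := forall x, X x -> y ⊓ x = zero.

(* With w = y ⊓ x: w ⊖ z ≼ (y ⊖ z) ⊓ x = 0, so w ≼ z ⊓ x = 0. *)
Lemma ann_ideal X : ideal (ann X).
Proof.
split; first by move=> x _; rewrite !sub0x.
move=> y z Iyz Iz x Xx; set w := y ⊓ x.
have wx : w ≼ x by rewrite /w meetC; apply: le_subr.
have wz : w ≼ z.
  have := le_meet (le_sub2r z (le_subr y (y ⊖ x))) (le_trans (le_subr w z) wx).
  by rewrite (Iyz x Xx) subx0.
by have := le_meet wz wx; rewrite (Iz x Xx) subx0.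
Qed.

Lemma ann_disjoint (I : T -> Prop) x : I x -> ann I x -> x = zero.
Proof. by move=> Ix /(_ x Ix); rewrite subxx subx0. Qed.

Section SubdirectlyIrreducible.

Hypothesis si : subdirectly_irreducible sub.

Lemma ideal_monolith : exists p q, p <> q /\
  forall I, ideal I -> (exists2 u, I u & u <> zero) -> ideal_cong I p q.
Proof.
case: si => p [q [pq monolith]]; exists p, q; split => // I idI [u Iu u0].
apply: monolith; first exact: ideal_cong_congruence.
by exists u, zero; split; rewrite // /ideal_cong subx0 sub0x; split; last apply: ideal0.
Qed.

Lemma meet_neq0 u s : u <> zero -> s <> zero -> u ⊓ s <> zero.
Proof.
move=> u0 s0 us0; pose I := ann (fun x => x = s); pose J := ann I.
have Iu : I u by move=> x ->.
have Js : J s by move=> x Ix; rewrite meetC; apply: Ix.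
have [p [q [pq cong_pq]]] := ideal_monolith.
have [Ipq Iqp] := cong_pq I (ann_ideal _) (ex_intro2 _ _ u Iu u0).
have [Jpq Jqp] := cong_pq J (ann_ideal _) (ex_intro2 _ _ s Js s0).
by apply: pq; apply: le_anti; [exact: ann_disjoint Ipq Jpq | exact: ann_disjoint Iqp Jqp].
Qed.

Variables (a : T) (atom_a : is_atom sub zero a).

Lemma atom_le s : s <> zero -> a ≼ s.
Proof.
case: atom_a => a0 atomic s0.
have [as0 | <-] := atomic _ (le_subr a (a ⊖ s)); last exact: le_meetr.
by case: (meet_neq0 a0 s0).
Qed.

Lemma le_sub_atom s y : y ≼ s -> y <> s -> y ≼ s ⊖ a.
Proof.
move=> ys yns; have s_y0 : s ⊖ y <> zero by move/(le_anti ys).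
by have := le_sub2l s (atom_le s_y0); rewrite meetC meet_id.
Qed.

End SubdirectlyIrreducible.

End Commutative.

End BCK.

Section Finite.

Variables (T : finType) (sub : T -> T -> T) (zero : T).

Local Notation "x ⊖ y" := (sub x y) (at level 50, left associativity).
Local Notation "x ≼ y" := (x ⊖ y = zero) (at level 70, no associativity).

Hypothesis bck : is_BCK sub zero.

Definition downset s := [set y | y ⊖ s == zero].

Lemma downset_sub x y : x ≼ y -> downset x \subset downset y.
Proof.
move=> xy; apply/subsetP => z; rewrite !inE => /eqP zx.
by apply/eqP; apply: le_trans xy.
Qed.

Lemma downset_proper x y : x ≼ y -> x <> y -> downset x \proper downset y.
Proof.
move=> xy xny; apply/properP; split; first exact: downset_sub.
exists y; first by rewrite inE (subxx bck).
rewrite inE; apply/eqP => yx.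
by apply: xny; apply: (le_anti bck).
Qed.

Lemma exists_maximal_above x : exists2 m, is_maximal sub zero m & x ≼ m.
Proof.
have x_x : x ⊖ x == zero by rewrite (subxx bck).
have [m /eqP xm max_m] :=
  @arg_maxnP _ x (fun m => x ⊖ m == zero) (fun m => #|downset m|) x_x.
exists m => // y my; case: (y =P m) => // ynm.
have := proper_card (downset_proper my (nesym ynm)).
have x_y : x ⊖ y == zero by apply/eqP; apply: (le_trans bck) xm my.
by rewrite ltnNge (max_m y x_y : #|downset y| <= #|downset m|).
Qed.

Hypotheses (meetC : forall x y, x ⊖ (x ⊖ y) = y ⊖ (y ⊖ x))
  (si : subdirectly_irreducible sub).
Variables (a : T) (atom_a : is_atom sub zero a).

Lemma downset_sub_atom s : s <> zero -> downset (s ⊖ a) \proper downset s.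
Proof.
move=> s0; have a0 : a <> zero by case: atom_a.
apply: downset_proper; first exact: le_subr.
exact: (sub_neq bck meetC a0 (atom_le bck meetC si atom_a s0)).
Qed.

Lemma subalg_le_closed (B : T -> Prop) s y :
  subalg_closed sub zero B -> B a -> B s -> y ≼ s -> B y.
Proof.
case=> B0 B_sub Ba.
have [n] := ubnP #|downset s|; elim: n s y => // n IH s y lt_s Bs ys.
case: (y =P s) => [-> // | yns].
case: (s =P zero) => [s0 | s0]; first by move: ys; rewrite s0 subx0 // => ->.
apply: (IH (s ⊖ a)); last exact: le_sub_atom yns.
  exact: leq_trans (proper_card (downset_sub_atom s0)) lt_s.
exact: B_sub.
Qed.

End Finite.

Theorem mainTheorem1 (T : finType) (sub : T -> T -> T) (zero : T)
  (HA : is_cBCK sub zero) (HSI : subdirectly_irreducible sub)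
  (a : T) (Ha : is_atom sub zero a) :
  forall x : T, generated sub zero (fun y => is_maximal sub zero y \/ y = a) x.
Proof.
case: HA => bck meetC x B subalgB genB.
have [m max_m xm] := exists_maximal_above bck x.
have Ba : B a by apply: genB; right.
have Bm : B m by apply: genB; left.
exact: (subalg_le_closed bck meetC HSI Ha subalgB Ba Bm xm).
Qed.
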